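(* Let $F_1$ be the disjoint union of $S_0$ and $S_{2,1^2}$. Then $\mathrm{HDE}(F_1;S_{2,1^0})=2$; consequently, for every graph $G$, $\hom(S_0;G)\cdot\hom(S_{2,1^2};G)\ge\hom(S_{2,1^0};G)^2$.
   Context: All graphs are finite; $\hom(H;G)$ is the number of graph homomorphisms from $H$ to $G$ (so $\hom$ of a disjoint union is the product of the $\hom$'s of the components). $S_0$ is a single vertex; for $k\ge0$, $S_{2,1^k}$ is the tree with vertex set $\{1,\ldots,k+3\}$ and edge set $\{\{1,j\}:2\le j\le k+2\}\cup\{\{k+2,k+3\}\}$. The homomorphism domination exponent $\mathrm{HDE}(F_1;F_2)$ of graphs $F_1,F_2$ is the maximum real $c$ such that $\hom(F_1;G)\ge\hom(F_2;G)^c$ for every graph $G$. *)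

From HB Require Import structures.
From mathcomp Require Import all_boot all_order all_algebra.
From mathcomp Require Import reals exp.
Set Implicit Arguments. Unset Strict Implicit. Unset Printing Implicit Defensive.
Import Order.TTheory GRing.Theory Num.Theory.
Local Open Scope ring_scope.

Record graph := Graph {
  vtx : finType;
  adj : rel vtx;
  adj_sym : symmetric adj;
  adj_irr : irreflexive adj }.

Definition hom (H G : graph) : nat :=
  #|[set f : {ffun vtx H -> vtx G} |
      [forall x, forall y, adj x y ==> adj (f x) (f y)]]|.

Definition dunion_adj (G H : graph) : rel (vtx G + vtx H)%type :=
  fun x y => match x, y with
             | inl a, inl b => adj a b
             | inr a, inr b => adj a b
             | _, _ => false end.

Lemma dunion_sym (G H : graph) : symmetric (@dunion_adj G H).
Proof. by case=> a [] b //=; apply: adj_sym. Qed.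

Lemma dunion_irr (G H : graph) : irreflexive (@dunion_adj G H).
Proof. by case=> a /=; apply: adj_irr. Qed.

Definition dunion (G H : graph) : graph :=
  Graph (@dunion_sym G H) (@dunion_irr G H).

Definition S0_adj : rel 'I_1 := fun _ _ => false.
Lemma S0_sym : symmetric S0_adj. Proof. by []. Qed.
Lemma S0_irr : irreflexive S0_adj. Proof. by []. Qed.
Definition S0 : graph := Graph S0_sym S0_irr.

(* S_{2,1^k}: vertices {1,...,k+3} encoded as 'I_(k+3) via i <-> i+1;
   edges {1,j} for 2 <= j <= k+2, and {k+2,k+3}. *)
Definition S21_edge (k : nat) (a b : nat) : bool :=
  (((a == 0) && (1 <= b <= k.+1)) || ((a == k.+1) && (b == k.+2)))%N.
Definition S21_adj (k : nat) : rel 'I_(k.+3) :=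
  fun x y => S21_edge k x y || S21_edge k y x.
Lemma S21_sym k : symmetric (@S21_adj k).
Proof. by move=> x y; rewrite /S21_adj orbC. Qed.
Lemma S21_irr k : irreflexive (@S21_adj k).
Proof.
move=> x; rewrite /S21_adj /S21_edge orbb.
case: x => [[|x] _] //=; rewrite !eqSS.
by case: (x =P k) => // ->; rewrite /= (ltn_eqF (ltnSn k)).
Qed.
Definition S21 (k : nat) : graph := Graph (@S21_sym k) (@S21_irr k).

Definition dominates (R : realType) (F1 F2 : graph) (c : R) : Prop :=
  forall G : graph, powR (hom F2 G)%:R c <= (hom F1 G)%:R.

Definition isHDE (R : realType) (F1 F2 : graph) (c : R) : Prop :=
  dominates F1 F2 c /\ (forall c' : R, dominates F1 F2 c' -> c' <= c).

(* Write d(v) for the degree of v and s(a) for the sum of the degrees of the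
   neighbours of a. Then hom(S_{2,1^0};G) = sum_a s(a) and
   hom(S_{2,1^2};G) = sum_a d(a)^2 s(a), while hom(S_0 + S_{2,1^2};G) is |V(G)|
   times the latter. Two applications of Cauchy-Schwarz,
   (sum_a s(a))^2 <= |V| sum_a s(a)^2 and s(a)^2 <= d(a) sum_{b~a} d(b)^2,
   followed by exchanging the double sum sum_a d(a) sum_{b~a} d(b)^2 =
   sum_b d(b)^2 s(b), give the inequality, hence HDE >= 2. For G = K_2 we get
   hom(S_0 + S_{2,1^2};K_2) = 4 = hom(S_{2,1^0};K_2)^2, so no exponent larger
   than 2 works. *)
From HB Require Import structures.
From mathcomp Require Import all_boot all_order ssralg ssrnum.
From mathcomp Require Import reals exp.
From mathcomp Require Import ring.
Import Order.TTheory GRing.Theory Num.Theory.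
Set Implicit Arguments. Unset Strict Implicit. Unset Printing Implicit Defensive.

Lemma weighted_Cauchy_Schwarz (I : finType) (a x : I -> nat) :
  (\sum_i a i * x i) ^ 2 <= (\sum_i a i) * (\sum_i a i * x i ^ 2).
Proof.
have lhsE : 2 * (\sum_i a i * x i) ^ 2 =
    \sum_i \sum_j a i * a j * (2 * (x i * x j)).
  rewrite expnS expn1 big_distrl big_distrr /=; apply: eq_bigr => i _.
  by rewrite !big_distrr /=; apply: eq_bigr => j _; ring.
have rhsE : 2 * ((\sum_i a i) * (\sum_i a i * x i ^ 2)) =
    \sum_i \sum_j a i * a j * (x i ^ 2 + x j ^ 2).
  have prodE : (\sum_i a i) * (\sum_i a i * x i ^ 2) =
      \sum_i \sum_j a i * a j * x j ^ 2.
    rewrite big_distrl /=; apply: eq_bigr => i _; rewrite big_distrr /=.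
    by apply: eq_bigr => j _; rewrite mulnA.
  rewrite mul2n -addnn prodE [X in X + _]exchange_big -big_split /=.
  by apply: eq_bigr => i _; rewrite -big_split /=; apply: eq_bigr => j _; ring.
rewrite -(leq_pmul2l (isT : 0 < 2)) lhsE rhsE.
apply: leq_sum => i _; apply: leq_sum => j _; apply: leq_mul => //.
exact: nat_Cauchy.
Qed.

Definition is_hom (H G : graph) (f : {ffun vtx H -> vtx G}) : bool :=
  [forall x, forall y, adj x y ==> adj (f x) (f y)].

Lemma homE (H G : graph) : hom H G = \sum_(f : {ffun vtx H -> vtx G}) is_hom f.
Proof.
rewrite -[hom H G]/#|[set f | is_hom f]| -sum1_card big_mkcond /=.
by apply: eq_bigr => f _; rewrite in_set; case: is_hom.
Qed.

Section DisjointUnion.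
Variables H1 H2 G : graph.

Definition ffun_join (p : {ffun vtx H1 -> vtx G} * {ffun vtx H2 -> vtx G}) :
    {ffun vtx (dunion H1 H2) -> vtx G} :=
  [ffun x => match x with inl a => p.1 a | inr b => p.2 b end].

Definition ffun_split (f : {ffun vtx (dunion H1 H2) -> vtx G}) :
    {ffun vtx H1 -> vtx G} * {ffun vtx H2 -> vtx G} :=
  ([ffun a => f (inl a)], [ffun b => f (inr b)]).

Lemma ffun_joinK : cancel ffun_join ffun_split.
Proof. by case=> g h; congr pair; apply/ffunP => x; rewrite !ffunE. Qed.

Lemma ffun_splitK : cancel ffun_split ffun_join.
Proof. by move=> f; apply/ffunP => -[a|b]; rewrite !ffunE. Qed.

Lemma is_hom_join g h : is_hom (ffun_join (g, h)) = is_hom g && is_hom h.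
Proof.
apply/idP/andP => [hom_gh | [hom_g hom_h]].
  split; apply/forallP => x; apply/forallP => y; apply/implyP => xy.
    by have := implyP (forallP (forallP hom_gh (inl x)) (inl y)) xy; rewrite !ffunE.
  by have := implyP (forallP (forallP hom_gh (inr x)) (inr y)) xy; rewrite !ffunE.
apply/forallP => -[x|x]; apply/forallP => -[y|y] //=; rewrite !ffunE.
  exact: (forallP (forallP hom_g x) y).
exact: (forallP (forallP hom_h x) y).
Qed.

Lemma hom_dunion : hom (dunion H1 H2) G = hom H1 G * hom H2 G.
Proof.
rewrite !homE (reindex ffun_join) /=; last first.
  exact: onW_bij (Bijective ffun_joinK ffun_splitK).
rewrite big_distrlr pair_big /=; apply: eq_bigr => -[g h] _ /=.
by rewrite is_hom_join mulnb.
Qed.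

End DisjointUnion.

Lemma hom_S0 (G : graph) : hom S0 G = #|vtx G|.
Proof.
rewrite homE (eq_bigr (fun _ => 1)) => [|f _]; last first.
  by have -> : is_hom f by apply/forallP => x; apply/forallP.
by rewrite sum1_card card_ffun card_ord expn1.
Qed.

Section Counting.
Variable G : graph.
Local Notation T := (vtx G).

Definition deg (v : T) : nat := \sum_w adj v w.

Definition nbr_deg_sum (v : T) : nat := \sum_w adj v w * deg w.

Definition ffun3 (t : T * T * T) : {ffun 'I_3 -> T} :=
  let: (a, b, c) := t in [ffun i : 'I_3 => nth a [:: a; b; c] i].

Definition ffun3_inv (f : {ffun 'I_3 -> T}) : T * T * T :=
  (f (inord 0), f (inord 1), f (inord 2)).

Lemma ffun3K : cancel ffun3 ffun3_inv.
Proof. by move=> [[a b] c]; rewrite /ffun3_inv !ffunE !inordK. Qed.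

Lemma ffun3_invK : cancel ffun3_inv ffun3.
Proof.
move=> f; apply/ffunP => i; rewrite ffunE.
by case: i => [[|[|[|k]]] lt_k] //=; congr (f _); apply: val_inj; rewrite /= inordK.
Qed.

Lemma sum_ffun3 (F : {ffun 'I_3 -> T} -> nat) :
  \sum_f F f = \sum_a \sum_b \sum_c F (ffun3 (a, b, c)).
Proof.
rewrite (reindex ffun3) /=; last exact: onW_bij (Bijective ffun3K ffun3_invK).
by rewrite !pair_big; apply: eq_bigr => -[[a b] c].
Qed.

Definition ffun5 (t : T * T * T * T * T) : {ffun 'I_5 -> T} :=
  let: (a, b, c, d, e) := t in [ffun i : 'I_5 => nth a [:: a; b; c; d; e] i].

Definition ffun5_inv (f : {ffun 'I_5 -> T}) : T * T * T * T * T :=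
  (f (inord 0), f (inord 1), f (inord 2), f (inord 3), f (inord 4)).

Lemma ffun5K : cancel ffun5 ffun5_inv.
Proof. by move=> [[[[a b] c] d] e]; rewrite /ffun5_inv !ffunE !inordK. Qed.

Lemma ffun5_invK : cancel ffun5_inv ffun5.
Proof.
move=> f; apply/ffunP => i; rewrite ffunE.
case: i => [[|[|[|[|[|k]]]]] lt_k] //=; congr (f _); apply: val_inj.
all: by rewrite /= inordK.
Qed.

Lemma sum_ffun5 (F : {ffun 'I_5 -> T} -> nat) :
  \sum_f F f = \sum_a \sum_b \sum_c \sum_d \sum_e F (ffun5 (a, b, c, d, e)).
Proof.
rewrite (reindex ffun5) /=; last exact: onW_bij (Bijective ffun5K ffun5_invK).
by rewrite !pair_big; apply: eq_bigr => -[[[[a b] c] d] e].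
Qed.

Lemma is_hom_ffun3 a b c :
  is_hom (H := S21 0) (ffun3 (a, b, c)) = adj a b && adj b c.
Proof.
apply/idP/andP => [hom_f | [ab bc]].
  have edge x y := implyP (forallP (forallP hom_f x) y).
  move: (edge (@Ordinal 3 0 isT) (@Ordinal 3 1 isT) isT).
  by move: (edge (@Ordinal 3 1 isT) (@Ordinal 3 2 isT) isT); rewrite !ffunE => ->.
apply/forallP => x; apply/forallP => y; apply/implyP.
case: x => [[|[|[|x]]] ?] //; case: y => [[|[|[|y]]] ?] //;
  by rewrite !ffunE //= adj_sym.
Qed.

Lemma is_hom_ffun5 a b c d e :
  is_hom (H := S21 2) (ffun5 (a, b, c, d, e)) = [&& adj a b, adj a c, adj a d & adj d e].
Proof.
apply/idP/and4P => [hom_f | [ab ac ad de]].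
  have edge x y := implyP (forallP (forallP hom_f x) y).
  move: (edge (@Ordinal 5 0 isT) (@Ordinal 5 1 isT) isT).
  move: (edge (@Ordinal 5 0 isT) (@Ordinal 5 2 isT) isT).
  move: (edge (@Ordinal 5 0 isT) (@Ordinal 5 3 isT) isT).
  by move: (edge (@Ordinal 5 3 isT) (@Ordinal 5 4 isT) isT); rewrite !ffunE => -> -> -> ->.
apply/forallP => x; apply/forallP => y; apply/implyP.
case: x => [[|[|[|[|[|x]]]]] ?] //; case: y => [[|[|[|[|[|y]]]]] ?] //;
  by rewrite !ffunE //= adj_sym.
Qed.

Lemma hom_S21_0 : hom (S21 0) G = \sum_a nbr_deg_sum a.
Proof.
rewrite homE sum_ffun3; apply: eq_bigr => a _; apply: eq_bigr => b _.
by rewrite /deg big_distrr /=; apply: eq_bigr => c _; rewrite is_hom_ffun3 mulnb.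
Qed.

Lemma hom_S21_2 : hom (S21 2) G = \sum_a deg a ^ 2 * nbr_deg_sum a.
Proof.
rewrite homE sum_ffun5; apply: eq_bigr => a _.
rewrite expnS expn1 -mulnA {1}/deg big_distrl; apply: eq_bigr => b _ /=.
rewrite {1}/deg !big_distrl big_distrr; apply: eq_bigr => c _ /=.
rewrite !big_distrr; apply: eq_bigr => d _ /=.
rewrite /deg !big_distrr; apply: eq_bigr => e _ /=.
by rewrite is_hom_ffun5 -!mulnb; ring.
Qed.

Lemma nbr_deg_sum_sqr_le a :
  nbr_deg_sum a ^ 2 <= deg a * \sum_b adj a b * deg b ^ 2.
Proof. exact: weighted_Cauchy_Schwarz. Qed.

Lemma exchange_nbr_deg_sum :
  \sum_a deg a * \sum_b adj a b * deg b ^ 2 = \sum_b deg b ^ 2 * nbr_deg_sum b.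
Proof.
under eq_bigr => a _ do rewrite big_distrr /=.
rewrite exchange_big; apply: eq_bigr => b _ /=.
by rewrite big_distrr; apply: eq_bigr => a _ /=; rewrite (adj_sym a b); ring.
Qed.

Lemma sqr_sum_nbr_deg_sum_le :
  (\sum_a nbr_deg_sum a) ^ 2 <= #|T| * \sum_a deg a ^ 2 * nbr_deg_sum a.
Proof.
have := weighted_Cauchy_Schwarz (fun _ : T => 1) nbr_deg_sum.
rewrite sum1_card; under eq_bigr do rewrite mul1n.
under [X in _ * X]eq_bigr do rewrite mul1n.
move=> /leq_trans; apply; apply: leq_mul => //; rewrite -exchange_nbr_deg_sum.
by apply: leq_sum => a _; apply: nbr_deg_sum_sqr_le.
Qed.

End Counting.

Lemma hom_S21_0_sqr_le (G : graph) :
  hom (S21 0) G ^ 2 <= hom S0 G * hom (S21 2) G.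
Proof. by rewrite hom_S21_0 hom_S0 hom_S21_2; apply: sqr_sum_nbr_deg_sum_le. Qed.

Definition K2_adj : rel bool := fun x y => x != y.
Lemma K2_sym : symmetric K2_adj. Proof. by move=> x y; rewrite /K2_adj eq_sym. Qed.
Lemma K2_irr : irreflexive K2_adj. Proof. by move=> x; rewrite /K2_adj eqxx. Qed.
Definition K2 : graph := Graph K2_sym K2_irr.

Lemma hom_S21_0_K2 : hom (S21 0) K2 = 2.
Proof. by rewrite hom_S21_0 /nbr_deg_sum /deg !big_bool. Qed.

Lemma hom_S0_S21_2_K2 : hom (dunion S0 (S21 2)) K2 = 4.
Proof. by rewrite hom_dunion hom_S0 hom_S21_2 /nbr_deg_sum /deg !big_bool card_bool. Qed.

Local Open Scope ring_scope.

Lemma gt1_ler_powR (R : realType) (a x y : R) :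
  1 < a -> (a `^ x <= a `^ y) = (x <= y).
Proof.
move=> a_gt1; have a_gt0 : 0 < a by apply: lt_trans a_gt1.
rewrite -(ler_ln (powR_gt0 x a_gt0) (powR_gt0 y a_gt0)).
by rewrite !ln_powR ler_pM2r // ln_gt0.
Qed.

Theorem theorem3p6 (R : realType) :
  isHDE (dunion S0 (S21 2)) (S21 0) (2 : R) /\
  (forall G : graph, (hom (S21 0) G ^ 2 <= hom S0 G * hom (S21 2) G)%N).
Proof.
split; last exact: hom_S21_0_sqr_le.
split=> [G | c /(_ K2)].
  by rewrite powR_mulrn // -natrX ler_nat hom_dunion hom_S21_0_sqr_le.
rewrite hom_S21_0_K2 hom_S0_S21_2_K2.
have -> : (4%:R : R) = 2%:R `^ 2%:R by rewrite powR_mulrn // -natrX.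
by rewrite gt1_ler_powR; last rewrite ltr1n.
Qed.
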